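(* For $(\alpha,\beta)\in\mathbb{R}^2$, let $\mathfrak{m}_{\alpha,\beta}$ be the $8$-dimensional real Lie algebra with a basis $\{v^1,\dots,v^8\}$ of its dual satisfying $$dv^1=dv^2=dv^3=0,\quad dv^4=v^{13},\quad dv^5=v^{23},\quad dv^6=v^{14}+v^{25}-v^{35},$$ $$dv^7=\alpha v^{12}+v^{15}+v^{24}+v^{34},\quad dv^8=v^{16}-2\beta v^{25}+v^{27}-\beta v^{35}-v^{45},$$ and let $\{v'^1,\dots,v'^8\}$ be the analogous basis of $\mathfrak{m}_{\alpha',\beta'}^*$ (same equations with $(\alpha',\beta')$). Let $f:\mathfrak{m}_{\alpha,\beta}\to\mathfrak{m}_{\alpha',\beta'}$ be a Lie algebra isomorphism and $F:\bigwedge^*\mathfrak{m}_{\alpha',\beta'}^*\to\bigwedge^*\mathfrak{m}_{\alpha,\beta}^*$ the extension of its dual, written $F(v'^i)=\sum_{j=1}^8\lambda^i_j v^j$, so that $\Lambda=(\lambda^i_j)\in GL(8,\mathbb{R})$ and $F(dv'^i)=d(F(v'^i))$ for all $i$. Then $F(v'^i)\wedge v^{123}=0$ for $i=1,2,3$; $F(v'^i)\wedge v^{12345}=0$ for $i=4,5$; and $F(v'^i)\wedge v^{1234567}=0$ for $i=6,7$. In particular $\Lambda$ is block triangular and $$\det(\lambda^i_j)_{i,j=1,2,3}\cdot\det(\lambda^i_j)_{i,j=4,5}\cdot\det(\lambda^i_j)_{i,j=6,7}\cdot\lambda^8_8=\det\Lambda\neq0.$$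
   Context: $v^{ij}=v^i\wedge v^j$, $v^{i_1\cdots i_k}=v^{i_1}\wedge\cdots\wedge v^{i_k}$, and $d$ is the Chevalley–Eilenberg differential. *)

From mathcomp Require Import all_boot all_order all_algebra.
From mathcomp Require Import reals.
Set Implicit Arguments. Unset Strict Implicit. Unset Printing Implicit Defensive.
Import Order.TTheory GRing.Theory Num.Theory.
Local Open Scope ring_scope.

(* Indices 1..8 of the paper are the ordinals 0..7 of 'I_8.
   A 1-form  sum_j a_j v^j  is a row vector a : 'rV_8.
   A 2-form  omega = 1/2 sum_{a,b} W_{ab} v^a /\ v^b  is a skew matrix W : 'M_8;
   thus v^{jk} corresponds to E_{jk} - E_{kj}. *)

(* v^{jk}, with 1-based paper indices j, k *)
Definition vv {R : realType} (j k : nat) : 'M[R]_8 :=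
  delta_mx (inord j.-1) (inord k.-1) - delta_mx (inord k.-1) (inord j.-1).

(* The Chevalley-Eilenberg differential of the basis 1-forms of m_{alpha,beta}^*:
   dm al be i = d v^{i+1} (as a skew matrix). *)
Definition dm {R : realType} (al be : R) (i : 'I_8) : 'M[R]_8 :=
  match val i with
  | 0 | 1 | 2 => 0
  | 3 => vv 1 3
  | 4 => vv 2 3
  | 5 => vv 1 4 + vv 2 5 - vv 3 5
  | 6 => al *: vv 1 2 + vv 1 5 + vv 2 4 + vv 3 4
  | _ => vv 1 6 - (2 * be) *: vv 2 5 + vv 2 7 - be *: vv 3 5 - vv 4 5
  end.

(* F extended to the exterior algebra, applied to the 2-form W' of
   m_{alpha',beta'}^*, where F(v'^i) = sum_j L i j v^j:
   F(1/2 sum W'_{jk} v'^j/\v'^k) has skew matrix L^T W' L. *)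
Definition F2 {R : realType} (L : 'M[R]_8) (W : 'M[R]_8) : 'M[R]_8 :=
  L^T *m W *m L.

Definition F1 {R : realType} (L : 'M[R]_8) (i : 'I_8) : 'rV[R]_8 := row i L.

Definition d1 {R : realType} (al be : R) (a : 'rV[R]_8) : 'M[R]_8 :=
  \sum_(j < 8) a 0 j *: dm al be j.

(* Forms of higher degree: coefficients on increasing multi-indices,
   i.e. functions on subsets S of 'I_8  (v^S = v^{s_1 ... s_k}, s_1<...<s_k). *)
Definition kform (R : realType) := {ffun {set 'I_8} -> R}.

(* wedge of a 1-form a with the basis form v^S:
   v^j /\ v^S = (-1)^{#{s in S | s < j}} v^{S u {j}}  for j notin S. *)
Definition wedge1 {R : realType} (a : 'rV[R]_8) (S : {set 'I_8}) : kform R :=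
  [ffun T => \sum_(j < 8 | (j \notin S) && (T == j |: S))
               (-1) ^+ #|[set s in S | (s < j)%N]| * a 0 j].

(* v^{1...k} as the index set {0,...,k-1} *)
Definition vfirst (k : nat) : {set 'I_8} := [set j : 'I_8 | j < k]%N.

From mathcomp Require Import all_boot all_order all_algebra.
From mathcomp Require Import reals zify.
Import Order.TTheory GRing.Theory Num.Theory.
Local Open Scope ring_scope.

(* The blocks v^1 v^2 v^3 | v^4 v^5 | v^6 v^7 | v^8 filter the Lie algebra: each
   dv^k lies in the exterior square of the span of the blocks before that of v^k.
   Conversely the coefficient of v^j (j >= 4) in a 1-form a can be read off da at
   a monomial v^{rc} with c >= j - 2, since v^{13}, v^{23}, v^{14}, v^{15}, v^{16}
   each occur in exactly one dv^k.  So, block by block: once F maps the span of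
   the blocks preceding that of v'^i into itself, F(dv'^i) = d(F v'^i) has no
   monomial v^{rc} with c past those blocks, hence F(v'^i) has no component beyond
   its own block.  The determinant of the block triangular matrix then factors. *)

Definition block_start (i : nat) : nat :=
  (if i < 3 then 0 else if i < 5 then 3 else if i < 7 then 5 else 7)%N.

(* [block_end 7 = 7] is junk: [block_end] is only used for i < 7. *)
Definition block_end (i : nat) : nat :=
  (if i < 3 then 3 else if i < 5 then 5 else 7)%N.

Lemma block_start_leq i : (block_start i <= i)%N.
Proof. by rewrite /block_start; repeat case: ifP; lia. Qed.

Lemma block_end_ge3 i : (3 <= block_end i)%N.
Proof. by rewrite /block_end; repeat case: ifP. Qed.

Lemma block_start_add2_leq_end i : (i < 7)%N -> (block_start i + 2 <= block_end i)%N.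
Proof. by rewrite /block_start /block_end; repeat case: ifP; lia. Qed.

Lemma block_end_leq_start p i :
  (p < block_start i)%N -> (block_end p <= block_start i)%N.
Proof. by rewrite /block_start /block_end; repeat case: ifP; lia. Qed.

Lemma eq_inord n (i : 'I_n.+1) k : (k <= n)%N -> (i == inord k) = (i == k :> nat).
Proof. by move=> kn; rewrite -val_eqE /= inordK. Qed.

Section ChevalleyEilenberg.

Context {R : realType}.

Lemma dm_eq0 (al be : R) (i q p : 'I_8) :
  (block_start i <= p)%N -> dm al be i q p = 0.
Proof.
case: i => [[|[|[|[|[|[|[|[|//]]]]]]]] ?] hp; rewrite /block_start /= in hp.
all: rewrite /dm /= ?mxE ?eq_inord // ?(@gtn_eqF _ p) ?andbF ?(subr0, mulr0, addr0) //.
all: lia.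
Qed.

Lemma d1E al be (a : 'rV[R]_8) (r c : 'I_8) :
  d1 al be a r c = \sum_(j < 8) a 0 j * dm al be j r c.
Proof. by rewrite summxE; apply: eq_bigr => j _; rewrite mxE. Qed.

Lemma d1_entry_coef (al be : R) (a : 'rV[R]_8) (j : 'I_8) :
  (3 <= j)%N -> exists r c : 'I_8, (j <= c + 2)%N /\ d1 al be a r c = a 0 j.
Proof.
case: j => [[|[|[|[|[|[|[|[|//]]]]]]]] hj] //= _;
  [ exists (@Ordinal 8 0 isT), (@Ordinal 8 2 isT)
  | exists (@Ordinal 8 1 isT), (@Ordinal 8 2 isT)
  | exists (@Ordinal 8 0 isT), (@Ordinal 8 3 isT)
  | exists (@Ordinal 8 0 isT), (@Ordinal 8 4 isT)
  | exists (@Ordinal 8 0 isT), (@Ordinal 8 5 isT) ];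
  split => //.
all: rewrite d1E !big_ord_recl big_ord0 /dm /= !mxE !eq_inord //=.
all: rewrite ?(mulr0n, mulr1n, subr0, sub0r, mulr0, mulr1, addr0, add0r, subrr, oppr0).
all: by congr (a 0 _); apply: val_inj.
Qed.

Lemma F2_eq0 (m : nat) (L W : 'M[R]_8) (r c : 'I_8) :
  (forall q p : 'I_8, (m <= p)%N -> W q p = 0) ->
  (forall p : 'I_8, (p < m)%N -> L p c = 0) -> F2 L W r c = 0.
Proof.
move=> W0 L0; rewrite mxE; apply: big1 => p _.
have [pm | mp] := ltnP p m; first by rewrite L0 // mulr0.
by rewrite mxE big1 ?mul0r // => q _; rewrite W0 // mulr0.
Qed.

Lemma wedge1_vfirst_eq0 (a : 'rV[R]_8) k :
  (forall j : 'I_8, (k <= j)%N -> a 0 j = 0) -> wedge1 a (vfirst k) = 0.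
Proof.
move=> a0; apply/ffunP => T; rewrite !ffunE; apply: big1 => j /andP[jk _].
by move: jk; rewrite inE -leqNgt => /a0 ->; rewrite mulr0.
Qed.

Section BlockTriangular.

Context {al be al' be' : R} {L : 'M[R]_8}.
Hypothesis compat : forall i, F2 L (dm al' be' i) = d1 al be (F1 L i).

Lemma row_eq0_beyond_block (i : 'I_8) : (i < 7)%N ->
  (forall p c : 'I_8, (p < block_start i)%N -> (block_start i <= c)%N -> L p c = 0) ->
  forall j : 'I_8, (block_end i <= j)%N -> L i j = 0.
Proof.
move=> /block_start_add2_leq_end start_end prev j hj.
have j3 := leq_trans (block_end_ge3 i) hj.
have [r [c [jc d1_rc]]] := d1_entry_coef al be (F1 L i) j j3.
have -> : L i j = F1 L i 0 j by rewrite mxE.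
rewrite -d1_rc -compat; apply: (F2_eq0 (block_start i)) => [q p|p p_lt].
  exact: dm_eq0.
by apply: prev => //; lia.
Qed.

Lemma eq0_beyond_block (i j : 'I_8) : (i < 7)%N -> (block_end i <= j)%N -> L i j = 0.
Proof.
have [n] := ubnP i; elim: n i j => // n IHn i j /ltnSE i_le i7.
apply: row_eq0_beyond_block => // p c p_lt c_ge.
have p_lt_i := leq_trans p_lt (block_start_leq i).
apply: IHn; [exact: leq_trans p_lt_i i_le | exact: ltn_trans p_lt_i i7 |].
by apply: leq_trans c_ge; apply: block_end_leq_start.
Qed.

End BlockTriangular.

End ChevalleyEilenberg.

Lemma det_lblock_eq0 (R : comNzRingType) m n (A : 'M[R]_(m + n)) :
  (forall (i : 'I_m) (j : 'I_n), A (lshift n i) (rshift m j) = 0) ->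
  \det A = \det (ulsubmx A) * \det (drsubmx A).
Proof.
move=> A0; rewrite -{1}(submxK A) (_ : ursubmx A = 0) ?det_lblock //.
by apply/matrixP => i j; rewrite !mxE A0.
Qed.

Lemma det_block_lower (R : comNzRingType) (L : 'M[R]_8) :
  (forall i j : 'I_8, (i < 7)%N -> (block_end i <= j)%N -> L i j = 0) ->
  \det (\matrix_(i < 3, j < 3) L (inord i) (inord j))
  * \det (\matrix_(i < 2, j < 2) L (inord (i + 3)) (inord (j + 3)))
  * \det (\matrix_(i < 2, j < 2) L (inord (i + 5)) (inord (j + 5)))
  * L (inord 7) (inord 7) = \det L.
Proof.
move=> L0.
rewrite [RHS](@det_lblock_eq0 _ 3 5) ?[\det (drsubmx _)](@det_lblock_eq0 _ 2 3)
  ?[\det (drsubmx (drsubmx _))](@det_lblock_eq0 _ 2 1).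
2-4: move=> i j; rewrite ?mxE; apply: L0; case: i => [[|[|[|//]]] ?] //=; lia.
rewrite -!mulrA det_mx11; congr (_ * (_ * (_ * _))); try congr (\det _).
all: try apply/matrixP => -[i hi] -[j hj].
all: rewrite ?mxE; congr (L _ _); apply: val_inj; rewrite /= inordK //; lia.
Qed.

Theorem lemma3p4 (R : realType) (al be al' be' : R) (L : 'M[R]_8) :
  L \in unitmx ->
  (forall i : 'I_8, F2 L (dm al' be' i) = d1 al be (F1 L i)) ->
  [/\ (forall i : 'I_8, (i < 3)%N -> wedge1 (F1 L i) (vfirst 3) = 0),
      (forall i : 'I_8, (3 <= i < 5)%N -> wedge1 (F1 L i) (vfirst 5) = 0),
      (forall i : 'I_8, (5 <= i < 7)%N -> wedge1 (F1 L i) (vfirst 7) = 0),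
      (forall i j : 'I_8, (i < 7)%N ->
          (j >= (if (i < 3)%N then 3 else if (i < 5)%N then 5 else 7))%N -> L i j = 0)
      &
      \det (\matrix_(i < 3, j < 3) L (inord i) (inord j))
      * \det (\matrix_(i < 2, j < 2) L (inord (i + 3)) (inord (j + 3)))
      * \det (\matrix_(i < 2, j < 2) L (inord (i + 5)) (inord (j + 5)))
      * L (inord 7) (inord 7)
      = \det L /\ \det L != 0].
Proof.
move=> L_unit compat.
have L0 := eq0_beyond_block compat.
have F1_wedge0 (i : 'I_8) k :
    (i < 7)%N -> (block_end i <= k)%N -> wedge1 (F1 L i) (vfirst k) = 0.
  move=> i7 end_k; apply: wedge1_vfirst_eq0 => j k_j.
  by rewrite mxE L0 // (leq_trans end_k).
split=> [i i3 | i /andP[i3 i5] | i /andP[i5 i7] | //|].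
1-3: by apply: F1_wedge0; rewrite /block_end; repeat case: ifP; lia.
by split; [exact: det_block_lower | rewrite -unitfE -unitmxE].
Qed.
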